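(* Fix an integer $n\ge 2$ and $\lambda>0$. For $\mu>0$ let $q(t)$, $t\ge 0$, be the continuous-time Markov chain on $\{0,1,\dots,n\}$ with $q(0)=0$ and transition rates: $j\to j+1$ at rate $\lambda$ for $0\le j\le n-1$; $j\to j-1$ at rate $\mu$ for $1\le j\le n-1$; the state $n$ is absorbing. Let $\tau=\inf\{t>0:\ q(t)=n\}$. Then, as $\mu\to\infty$ (with $\lambda$ and $n$ fixed), the random variable $(\lambda/\mu)^{n-1}\tau$ converges in distribution to an exponential random variable with parameter $\lambda$; that is, for every $t\ge 0$, $$\lim_{\mu\to\infty} P\big((\lambda/\mu)^{n-1}\tau>t\big)=e^{-\lambda t},$$ equivalently, for every $s\ge 0$, $\lim_{\mu\to\infty} E\, e^{-s(\lambda/\mu)^{n-1}\tau}=\frac{\lambda}{\lambda+s}$. Moreover, with $P_{n-1}(t)=P(q(t)=n-1,\ \tau>t)$ and $\varphi_{n-1}(s)=\int_0^\infty e^{-st}P_{n-1}(t)\,dt$, one has $\lambda P_{n-1}$ equal to the density of $\tau$ and $$\lim_{\mu\to\infty}\varphi_{n-1}\big((\lambda/\mu)^{n-1}s\big)=\frac{1}{\lambda+s}\quad (s\ge 0).$$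
   Context: Model interpretation: a system of $n$ identical elements, one working and the rest in reserve, with one repair device repairing one element at a time; working times are exponential with parameter $\lambda$, repair times exponential with parameter $\mu$, all independent. $q(t)$ is the number of broken elements at time $t$, and $\tau$ is the system failure time (all $n$ elements broken). *)

From Stdlib Require Import Reals Lra Lia.
Open Scope R_scope.

Definition up_rate (lam : R) (n j : nat) : R :=
  if Nat.ltb j n then lam else 0.
Definition down_rate (mu : R) (n j : nat) : R :=
  if andb (Nat.leb 1 j) (Nat.ltb j n) then mu else 0.

(* p j t = P(q(t) = j).  The state probabilities of a finite-state CTMC
   started at 0 are the (unique) solution of the Kolmogorov forward
   equations with initial distribution delta_0. *)
Definition kolmogorov_forward (lam mu : R) (n : nat) (p : nat -> R -> R) : Prop :=
  (forall j, (j <= n)%nat -> p j 0 = if Nat.eqb j 0 then 1 else 0) /\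
  (forall j t, (j <= n)%nat ->
     derivable_pt_lim (p j) t
       ((match j with 0%nat => 0 | S i => up_rate lam n i * p i t end)
        + down_rate mu n (S j) * p (S j) t
        - (up_rate lam n j + down_rate mu n j) * p j t)).

(* P(tau > t) = P(q(t) <> n) = sum_{j=0}^{n-1} p j t  (n is absorbing). *)
Definition survival (n : nat) (p : nat -> R -> R) (t : R) : R :=
  sum_f_R0 (fun j => p j t) (n - 1).

Definition scale (lam mu : R) (n : nat) : R := (lam / mu) ^ (n - 1).

Definition improper_int0 (f : R -> R) (l : R) : Prop :=
  exists pr : (forall b : R, Riemann_integrable f 0 b),
    forall eps, 0 < eps -> exists B, forall b, B <= b ->
      Rabs (RiemannInt (pr b) - l) < eps.

Definition lim_mu_infty (g : R -> R) (l : R) : Prop :=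
  forall eps, 0 < eps -> exists M, forall mu, M < mu -> Rabs (g mu - l) < eps.

From Stdlib Require Import Reals Lra Lia FunctionalExtensionality.
Open Scope R_scope.

(* With r = lam / mu, write y_j = p_j / r^j for the density of the state distribution with
   respect to the reversible weights r^j of the transient states 0..N (n = N + 1).  The forward
   equations become conservation laws with currents lam r^k (y_k - y_(k+1)), and the energy
   sum_j r^j y_j^2 decays exponentially by a discrete Poincare inequality; in particular
   p_j(t)^2 <= r^j, so the mass outside state 0 is O(sqrt r).
   Weighting p by the probabilities h_j of reaching 0 before absorption gives V with
   V' = - kappa p_0, kappa = lam r^N / sum_k r^k.  As V, p_0 and P(tau > t) are all within
   O(sqrt r) of each other, P(tau > t) = e^(- kappa t) + O(sqrt r), and kappa ~ lam r^N.
   Weighting p instead by the Laplace transforms E_j e^(- sigma tau) gives W with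
   W' = sigma W - p_N, so int_0^oo e^(- sigma t) p_N(t) dt = W(0) exactly; for sigma = s r^N
   this is a rational function of r whose value at r = 0 is 1 / (lam + s). *)

(** * Finite sums *)

Fixpoint sum_lt (f : nat -> R) (m : nat) : R :=
  match m with O => 0 | S k => sum_lt f k + f k end.

Lemma sum_f_R0_sum_lt f N : sum_f_R0 f N = sum_lt f (S N).
Proof. induction N as [|N IH]; simpl in *; [ring | rewrite IH; ring]. Qed.

Lemma sum_lt_ext f g m : (forall k, (k < m)%nat -> f k = g k) -> sum_lt f m = sum_lt g m.
Proof. induction m as [|m IH]; intros H; simpl; [|rewrite IH, H]; auto. Qed.

Lemma sum_lt_scal c f m : sum_lt (fun k => c * f k) m = c * sum_lt f m.
Proof. induction m as [|m IH]; simpl; [|rewrite IH]; ring. Qed.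

Lemma sum_lt_minus f g m : sum_lt (fun k => f k - g k) m = sum_lt f m - sum_lt g m.
Proof. induction m as [|m IH]; simpl; [|rewrite IH]; ring. Qed.

Lemma sum_lt_const c m : sum_lt (fun _ => c) m = INR m * c.
Proof. induction m as [|m IH]; simpl sum_lt; [simpl; ring | rewrite IH, S_INR; ring]. Qed.

Lemma sum_lt_le f g m : (forall k, (k < m)%nat -> f k <= g k) -> sum_lt f m <= sum_lt g m.
Proof.
  induction m as [|m IH]; intros H; simpl; [lra|].
  apply Rplus_le_compat; auto.
Qed.

Lemma sum_lt_nonneg f m : (forall k, (k < m)%nat -> 0 <= f k) -> 0 <= sum_lt f m.
Proof. intros H. rewrite <- (Rmult_0_r (INR m)), <- sum_lt_const. now apply sum_lt_le. Qed.

Lemma sum_lt_term_le f m k : (forall i, (i < m)%nat -> 0 <= f i) -> (k < m)%nat -> f k <= sum_lt f m.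
Proof.
  induction m as [|m IH]; intros H Hk; [lia|]. simpl.
  destruct (Nat.eq_dec k m) as [->|Hkm].
  - assert (0 <= sum_lt f m) by (apply sum_lt_nonneg; auto). lra.
  - assert (f k <= sum_lt f m) by (apply IH; auto; lia). assert (0 <= f m) by auto. lra.
Qed.

Lemma Rabs_sum_lt_le f m b : (forall k, (k < m)%nat -> Rabs (f k) <= b) -> Rabs (sum_lt f m) <= INR m * b.
Proof.
  induction m as [|m IH]; intros H; simpl sum_lt.
  - rewrite Rabs_R0; simpl; lra.
  - rewrite S_INR. eapply Rle_trans; [apply Rabs_triang|].
    assert (Rabs (sum_lt f m) <= INR m * b) by auto. assert (Rabs (f m) <= b) by auto. lra.
Qed.

Lemma sum_lt_first f m : sum_lt f (S m) = f O + sum_lt (fun k => f (S k)) m.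
Proof. induction m as [|m IH]; [simpl; ring|]. change (sum_lt f (S (S m))) with (sum_lt f (S m) + f (S m)). rewrite IH. simpl. ring. Qed.

Lemma sum_lt_telescope y m : sum_lt (fun k => y k - y (S k)) m = y O - y m.
Proof. induction m as [|m IH]; simpl; [|rewrite IH]; ring. Qed.

Lemma Rabs_sub_le_sum_lt_steps y m j : (j <= m)%nat ->
  Rabs (y j - y m) <= sum_lt (fun k => Rabs (y k - y (S k))) m.
Proof.
  induction m as [|m IH]; intros Hj.
  - replace j with O by lia. rewrite Rminus_diag, Rabs_R0. simpl; lra.
  - destruct (Nat.eq_dec j (S m)) as [->|Hjm].
    + rewrite Rminus_diag, Rabs_R0. apply sum_lt_nonneg. intros; apply Rabs_pos.
    + simpl. replace (y j - y (S m)) with ((y j - y m) + (y m - y (S m))) by ring.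
      eapply Rle_trans; [apply Rabs_triang|].
      assert (Rabs (y j - y m) <= sum_lt (fun k => Rabs (y k - y (S k))) m) by (apply IH; lia). lra.
Qed.

Definition lag (F : nat -> R) (j : nat) : R := match j with O => 0 | S i => F i end.

Lemma sum_lt_by_parts w F m :
  sum_lt (fun j => w j * (lag F j - F j)) m
  = sum_lt (fun k => (w (S k) - w k) * F k) m - w m * lag F m.
Proof. induction m as [|m IH]; simpl; [ring|]. rewrite IH. destruct m; simpl; ring. Qed.

Lemma sum_lt_sqr_le a m : (sum_lt a m) ^ 2 <= INR m * sum_lt (fun k => a k ^ 2) m.
Proof.
  induction m as [|m IH]; cbn [sum_lt]; [simpl; lra|].
  set (s := sum_lt a m) in *. set (q := sum_lt (fun k => a k ^ 2) m) in *.
  assert (Hq : 0 <= q) by (apply sum_lt_nonneg; intros; apply pow2_ge_0).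
  rewrite S_INR. assert (Hm : 0 <= INR m) by apply pos_INR.
  assert (Hcross : 2 * s * a m <= q + INR m * a m ^ 2).
  { destruct (Req_dec (INR m) 0) as [H0|H0].
    - rewrite H0 in IH. assert (s = 0) by nra. subst s. nra.
    - pose proof (pow2_ge_0 (s - INR m * a m)).
      apply (Rmult_le_reg_l (INR m)); nra. }
  replace ((s + a m) ^ 2) with (s ^ 2 + 2 * s * a m + a m ^ 2) by ring.
  replace ((INR m + 1) * (q + a m ^ 2)) with (INR m * q + (q + INR m * a m ^ 2) + a m ^ 2) by ring.
  lra.
Qed.

Lemma derivable_pt_lim_sum_lt fs ds m t :
  (forall j, (j < m)%nat -> derivable_pt_lim (fs j) t (ds j)) ->
  derivable_pt_lim (fun u => sum_lt (fun j => fs j u) m) t (sum_lt ds m).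
Proof.
  induction m as [|m IH]; intros H; simpl.
  - apply derivable_pt_lim_const.
  - apply (derivable_pt_lim_plus (fun u => sum_lt (fun j => fs j u) m) (fs m)); auto.
Qed.

Lemma continuity_pt_sum_lt fs m x : (forall k, (k < m)%nat -> continuity_pt (fs k) x) ->
  continuity_pt (fun y => sum_lt (fun k => fs k y) m) x.
Proof.
  induction m as [|m IH]; intros H; simpl.
  - apply continuity_pt_const; intros a b; reflexivity.
  - apply (continuity_pt_plus (fun y => sum_lt (fun k => fs k y) m) (fs m)); auto.
Qed.

Lemma Rabs_sum_lt_tail_le f m b : (forall k, (k < m)%nat -> Rabs (f (S k)) <= b) ->
  Rabs (sum_lt f (S m) - f O) <= INR m * b.
Proof.
  intros Hb. rewrite sum_lt_first.
  replace (f O + sum_lt (fun k => f (S k)) m - f O) with (sum_lt (fun k => f (S k)) m) by ring.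
  now apply Rabs_sum_lt_le.
Qed.

(** * Calculus *)

Lemma le_of_derive_nonpos f f' a b : a <= b ->
  (forall c, a <= c <= b -> derivable_pt_lim f c (f' c)) ->
  (forall c, a <= c <= b -> f' c <= 0) -> f b <= f a.
Proof.
  intros Hab Hd Hneg. destruct (Req_dec a b) as [<-|Hne]; [lra|].
  destruct (MVT_cor2 f f' a b) as [c [Hc1 Hc2]]; [lra|auto|].
  assert (f' c <= 0) by (apply Hneg; lra). nra.
Qed.

Lemma Rabs_sub_le_of_derive_le F F' G G' a b : a <= b ->
  (forall c, a <= c <= b -> derivable_pt_lim F c (F' c)) ->
  (forall c, a <= c <= b -> derivable_pt_lim G c (G' c)) ->
  (forall c, a <= c <= b -> Rabs (F' c) <= G' c) -> Rabs (F b - F a) <= G b - G a.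
Proof.
  intros Hab HF HG Hbound.
  assert (Hup : F b - G b <= F a - G a).
  { apply (le_of_derive_nonpos (fun u => F u - G u) (fun u => F' u - G' u)); auto.
    - intros c Hc. apply derivable_pt_lim_minus; auto.
    - intros c Hc. specialize (Hbound c Hc). pose proof (Rle_abs (F' c)). lra. }
  assert (Hlo : - F b - G b <= - F a - G a).
  { apply (le_of_derive_nonpos (fun u => - F u - G u) (fun u => - F' u - G' u)); auto.
    - intros c Hc. apply derivable_pt_lim_minus; auto. apply derivable_pt_lim_opp; auto.
    - intros c Hc. specialize (Hbound c Hc). pose proof (Rle_abs (- F' c)).
      rewrite Rabs_Ropp in *. lra. }
  apply Rabs_le. lra.
Qed.

Lemma exp_le_1 x : x <= 0 -> exp x <= 1.
Proof.
  intros Hx. rewrite <- exp_0. destruct (Req_dec x 0) as [->|Hne]; [lra|].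
  left. apply exp_increasing. lra.
Qed.

Lemma derivable_pt_lim_exp_scal c u : derivable_pt_lim (fun v => exp (c * v)) u (c * exp (c * u)).
Proof.
  replace (c * exp (c * u)) with (exp (c * u) * (c * 1)) by ring.
  apply (derivable_pt_lim_comp (fun v => c * v) exp).
  - apply (derivable_pt_lim_scal id). apply derivable_pt_lim_id.
  - apply derivable_pt_lim_exp.
Qed.

Lemma relaxation_close f g k d T : 0 < k -> 0 <= T ->
  (forall u, derivable_pt_lim f u (- k * g u)) ->
  (forall u, 0 <= u -> Rabs (f u - g u) <= d) ->
  Rabs (f T - f 0 * exp (- k * T)) <= d.
Proof.
  intros Hk HT Hf Hfg.
  (* compare f u * e^(k u), whose derivative is k e^(k u) (f u - g u), with d e^(k u) *)
  assert (Hint : Rabs (f T * exp (k * T) - f 0 * exp (k * 0)) <= d * exp (k * T) - d * exp (k * 0)).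
  { apply (Rabs_sub_le_of_derive_le (fun u => f u * exp (k * u))
             (fun u => - k * g u * exp (k * u) + f u * (k * exp (k * u)))
             (fun u => d * exp (k * u)) (fun u => d * (k * exp (k * u)))); auto.
    - intros c _. apply (derivable_pt_lim_mult f (fun v => exp (k * v))); auto.
      apply derivable_pt_lim_exp_scal.
    - intros c _. apply (derivable_pt_lim_scal (fun v => exp (k * v))). apply derivable_pt_lim_exp_scal.
    - intros c Hc. pose proof (exp_pos (k * c)).
      replace (- k * g c * exp (k * c) + f c * (k * exp (k * c))) with ((k * exp (k * c)) * (f c - g c)) by ring.
      rewrite Rabs_mult, Rabs_pos_eq by nra. rewrite Rmult_comm. apply Rmult_le_compat_r; [nra|]. apply Hfg; lra. }
  rewrite Rmult_0_r, exp_0, Rmult_1_r in Hint.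
  assert (Hd : 0 <= d) by (eapply Rle_trans; [apply Rabs_pos | apply (Hfg 0); lra]).
  replace (- k * T) with (- (k * T)) by ring. rewrite exp_Ropp.
  set (e := exp (k * T)) in *. assert (He : 0 < e) by apply exp_pos.
  replace (f T - f 0 * / e) with ((f T * e - f 0) / e) by (field; lra).
  unfold Rdiv. rewrite Rabs_mult, (Rabs_pos_eq (/ e)) by (left; apply Rinv_0_lt_compat; auto).
  apply (Rmult_le_reg_r e); auto. rewrite Rmult_assoc, Rinv_l, Rmult_1_r by lra. lra.
Qed.

Lemma Riemann_integrable_continuity_0 f : continuity f -> forall b, Riemann_integrable f 0 b.
Proof.
  intros Hc b. destruct (Rle_dec 0 b).
  - apply continuity_implies_RiemannInt; auto.
  - apply RiemannInt_P1, continuity_implies_RiemannInt; auto; lra.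
Qed.

Lemma improper_int0_of_antiderivative f F l : continuity f ->
  (forall t, derivable_pt_lim F t (f t)) ->
  (forall eps, 0 < eps -> exists B, forall b, B <= b -> Rabs (F b - l) < eps) ->
  improper_int0 f (l - F 0).
Proof.
  intros Hc HF Hlim. exists (Riemann_integrable_continuity_0 f Hc). intros eps Heps.
  destruct (Hlim eps Heps) as [B HB]. exists B. intros b Hb.
  set (dF := (fun x => exist _ (f x) (HF x)) : derivable F).
  assert (HdF : continuity (derive F dF)) by exact Hc.
  rewrite (FTC_Riemann {| c1 := F; diff0 := dF; cont1 := HdF |}); simpl.
  replace (F b - F 0 - (l - F 0)) with (F b - l) by ring. auto.
Qed.

Lemma improper_int0_ext f g l : (forall t, f t = g t) -> improper_int0 f l -> improper_int0 g l.
Proof. intros H. replace g with f; [auto | now apply functional_extensionality]. Qed.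

Lemma exp_neg_tail K a eps : 0 < a -> 0 < eps ->
  exists B, forall b, B <= b -> K * exp (- a * b) < eps.
Proof.
  intros Ha Heps. exists ((Rabs K + 1) / (a * eps)). intros b Hb.
  assert (HB : (Rabs K + 1) / (a * eps) * (a * eps) = Rabs K + 1) by (field; lra).
  assert (Hab : Rabs K + 1 <= a * b * eps).
  { rewrite <- HB. replace (a * b * eps) with (b * (a * eps)) by ring.
    apply Rmult_le_compat_r; nra. }
  pose proof (exp_ineq1_le (a * b)). pose proof (Rle_abs K).
  assert (Hinv : exp (- a * b) * exp (a * b) = 1).
  { rewrite <- exp_plus. replace (- a * b + a * b) with 0 by ring. apply exp_0. }
  pose proof (exp_pos (- a * b)). pose proof (exp_pos (a * b)).
  assert (K < eps * exp (a * b)) by nra.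
  apply (Rmult_lt_reg_r (exp (a * b))); auto. rewrite Rmult_assoc, Hinv. lra.
Qed.

Lemma lim_mu_infty_comp G lam : 0 < lam -> continuity_pt G 0 ->
  lim_mu_infty (fun mu => G (lam / mu)) (G 0).
Proof.
  intros Hlam HG eps Heps.
  destruct (HG eps Heps) as [alp [Halp HGa]]. exists (lam / alp). intros mu Hmu.
  assert (0 < lam / alp) by (apply Rdiv_lt_0_compat; auto).
  assert (Hmu0 : 0 < mu) by lra.
  assert (Hr : 0 < lam / mu) by (apply Rdiv_lt_0_compat; auto).
  assert (Hra : lam / mu < alp).
  { apply (Rmult_lt_reg_r mu); auto. unfold Rdiv. rewrite Rmult_assoc, Rinv_l by lra.
    apply (Rmult_lt_compat_l alp) in Hmu; auto.
    replace (alp * (lam / alp)) with lam in Hmu by (field; lra). lra. }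
  apply (HGa (lam / mu)). split.
  - split; [exact I | apply Rlt_not_eq, Hr].
  - simpl. unfold R_dist. rewrite Rminus_0_r, Rabs_pos_eq; lra.
Qed.

Lemma lim_mu_infty_squeeze g h l M : lim_mu_infty h 0 ->
  (forall mu, M < mu -> Rabs (g mu - l) <= h mu) -> lim_mu_infty g l.
Proof.
  intros Hh Hg eps Heps. destruct (Hh eps Heps) as [M' HM']. exists (Rmax M M'). intros mu Hmu.
  assert (M < mu) by (eapply Rle_lt_trans; [apply Rmax_l | eauto]).
  assert (Hh' : Rabs (h mu - 0) < eps) by (apply HM'; eapply Rle_lt_trans; [apply Rmax_r | eauto]).
  rewrite Rminus_0_r in Hh'. eapply Rle_lt_trans; [apply Hg; auto|].
  eapply Rle_lt_trans; [apply Rle_abs | auto].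
Qed.

(** * The birth-death chain *)

Definition flux (lam mu : R) (n : nat) (p : nat -> R -> R) (k : nat) (t : R) : R :=
  up_rate lam n k * p k t - down_rate mu n (S k) * p (S k) t.

Lemma kolmogorov_forward_flux lam mu n p j t : kolmogorov_forward lam mu n p -> (j <= n)%nat ->
  derivable_pt_lim (p j) t (lag (fun k => flux lam mu n p k t) j - flux lam mu n p j t).
Proof.
  intros [_ Hd] Hj. specialize (Hd j t Hj).
  match type of Hd with derivable_pt_lim _ _ ?v => replace (lag _ j - _) with v; auto end.
  unfold flux. destruct j as [|i]; simpl lag; [|ring].
  replace (down_rate mu n 0) with 0 by reflexivity. ring.
Qed.

Definition hit_denom (N : nat) (r : R) : R := sum_lt (fun k => r ^ (N - k)) (S N).

(* For the chain with r = lam / mu: the probability of reaching 0 before absorption from j. *)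
Definition hit_prob (N : nat) (r : R) (j : nat) : R :=
  1 - sum_lt (fun k => r ^ (N - k)) j / hit_denom N r.

Definition escape_rate (lam : R) (N : nat) (r : R) : R := lam * r ^ N / hit_denom N r.

Lemma hit_denom_ge1 N r : 0 <= r -> 1 <= hit_denom N r.
Proof.
  intros Hr. unfold hit_denom. simpl sum_lt. rewrite Nat.sub_diag, pow_O.
  assert (0 <= sum_lt (fun k => r ^ (N - k)) N) by (apply sum_lt_nonneg; intros; apply pow_le; auto).
  lra.
Qed.

Lemma hit_denom_at0 N : hit_denom N 0 = 1.
Proof.
  unfold hit_denom. simpl sum_lt. rewrite Nat.sub_diag, pow_O.
  rewrite (sum_lt_ext _ (fun _ => 0)), sum_lt_const by (intros; apply pow_i; lia). ring.
Qed.

Lemma continuity_pt_hit_denom N x : continuity_pt (hit_denom N) x.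
Proof.
  apply continuity_pt_sum_lt. intros k _. apply derivable_continuous_pt, derivable_pt_pow.
Qed.

Lemma hit_prob_start N r : hit_prob N r 0 = 1.
Proof. unfold hit_prob. simpl. unfold Rdiv. ring. Qed.

Lemma hit_prob_absorbing N r : 0 <= r -> hit_prob N r (S N) = 0.
Proof. intros Hr. unfold hit_prob. fold (hit_denom N r). pose proof (hit_denom_ge1 N r Hr). field. lra. Qed.

Lemma hit_prob_step N r k : hit_prob N r (S k) - hit_prob N r k = - (r ^ (N - k) / hit_denom N r).
Proof. unfold hit_prob. simpl. unfold Rdiv. ring. Qed.

Lemma hit_prob_bounds N r j : 0 <= r -> (j <= S N)%nat -> 0 <= hit_prob N r j <= 1.
Proof.
  intros Hr Hj. pose proof (hit_denom_ge1 N r Hr) as HQ. unfold hit_prob.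
  assert (Hpos : forall k, 0 <= r ^ (N - k)) by (intros; apply pow_le; auto).
  assert (0 <= sum_lt (fun k => r ^ (N - k)) j) by (apply sum_lt_nonneg; auto).
  assert (sum_lt (fun k => r ^ (N - k)) j <= hit_denom N r).
  { unfold hit_denom. replace (S N) with (j + (S N - j))%nat by lia.
    clear Hj. induction (S N - j)%nat as [|m IH].
    - rewrite Nat.add_0_r. lra.
    - rewrite Nat.add_succ_r. simpl. specialize (Hpos (j + m)%nat). lra. }
  split.
  - assert (sum_lt (fun k => r ^ (N - k)) j / hit_denom N r <= 1).
    { apply (Rmult_le_reg_r (hit_denom N r)); [lra|]. unfold Rdiv. rewrite Rmult_assoc, Rinv_l; lra. }
    lra.
  - assert (0 <= sum_lt (fun k => r ^ (N - k)) j / hit_denom N r)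
      by (apply Rmult_le_pos; [lra | left; apply Rinv_0_lt_compat; lra]). lra.
Qed.

(* u_j / u_(S N) is the Laplace transform E_j exp(- s r^N tau) of the absorption time from j,
   with a = s / lam: the backward equation solved upwards from state 0, where
   U_k = sum_(j <= k) u_j r^j. *)
Fixpoint laplace_coef (N : nat) (a r : R) (k : nat) : R * R :=
  match k with
  | O => (1, 1)
  | S k => let c := laplace_coef N a r k in
           let u := fst c + a * r ^ (N - k) * snd c in (u, snd c + u * r ^ S k)
  end.

Definition lap_u (N : nat) (a r : R) (k : nat) : R := fst (laplace_coef N a r k).
Definition lap_U (N : nat) (a r : R) (k : nat) : R := snd (laplace_coef N a r k).

Lemma lap_u_S N a r k : lap_u N a r (S k) = lap_u N a r k + a * r ^ (N - k) * lap_U N a r k.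
Proof. reflexivity. Qed.

Lemma lap_U_S N a r k : lap_U N a r (S k) = lap_U N a r k + lap_u N a r (S k) * r ^ S k.
Proof. reflexivity. Qed.

Lemma lap_U_diff N a r j : lap_U N a r j - lag (lap_U N a r) j = lap_u N a r j * r ^ j.
Proof. destruct j as [|j]; simpl lag; [cbn; ring | rewrite lap_U_S; ring]. Qed.

Lemma lap_u_ge1 N a r k : 0 <= a -> 0 <= r -> 1 <= lap_u N a r k /\ 0 <= lap_U N a r k.
Proof.
  intros Ha Hr. induction k as [|k [Hu HU]]; [cbn; lra|].
  assert (0 <= a * r ^ (N - k) * lap_U N a r k)
    by (apply Rmult_le_pos; auto; apply Rmult_le_pos; auto; apply pow_le; auto).
  assert (0 <= r ^ S k) by (apply pow_le; auto).
  rewrite lap_U_S, lap_u_S. split; [lra|]. apply Rplus_le_le_0_compat; auto. apply Rmult_le_pos; lra.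
Qed.

Lemma lap_at_r0 N a k : (k <= N)%nat -> lap_u N a 0 k = 1 /\ lap_U N a 0 k = 1.
Proof.
  induction k as [|k IH]; intros Hk; [split; reflexivity|].
  destruct IH as [Hu HU]; [lia|].
  rewrite lap_U_S, lap_u_S, Hu, HU, pow_i, (pow_i (S k)) by lia. split; ring.
Qed.

Lemma lap_u_r0_absorbing N a : lap_u N a 0 (S N) = 1 + a.
Proof.
  rewrite lap_u_S. destruct (lap_at_r0 N a N (le_n N)) as [-> ->]. rewrite Nat.sub_diag. simpl. ring.
Qed.

Lemma continuity_pt_lap N a k x :
  continuity_pt (fun r => lap_u N a r k) x /\ continuity_pt (fun r => lap_U N a r k) x.
Proof.
  induction k as [|k [Hu HU]].
  - split; apply continuity_pt_const; intros ? ?; reflexivity.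
  - assert (HuS : continuity_pt (fun r => lap_u N a r (S k)) x).
    { change (continuity_pt (fun r => lap_u N a r k + a * r ^ (N - k) * lap_U N a r k) x).
      apply continuity_pt_plus, continuity_pt_mult; auto. reg. }
    split; auto.
    change (continuity_pt (fun r => lap_U N a r k + lap_u N a r (S k) * r ^ S k) x).
    apply continuity_pt_plus, continuity_pt_mult; auto. reg.
Qed.

Section BirthDeathChain.

Variables (lam mu : R) (N : nat) (p : nat -> R -> R).
Hypotheses (Hlam : 0 < lam) (Hmu : 0 < mu) (Hp : kolmogorov_forward lam mu (S N) p).

Let r := lam / mu.

Let r_pos : 0 < r.
Proof. apply Rdiv_lt_0_compat; auto. Qed.

Let rpow_pos k : 0 < r ^ k.
Proof. apply pow_lt, r_pos. Qed.

Let p_init j : (j <= S N)%nat -> p j 0 = if Nat.eqb j 0 then 1 else 0.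
Proof. apply Hp. Qed.

(* The y_j of the header; setting it to 0 at the absorbing state makes the current formula
   uniform in k <= N. *)
Definition rel_dens (j : nat) (t : R) : R := if Nat.leb j N then p j t / r ^ j else 0.

Lemma p_rel_dens j t : (j <= N)%nat -> p j t = r ^ j * rel_dens j t.
Proof.
  intros Hj. unfold rel_dens. apply Nat.leb_le in Hj. rewrite Hj.
  field. apply Rgt_not_eq, rpow_pos.
Qed.

Lemma rel_dens_absorbing t : rel_dens (S N) t = 0.
Proof. unfold rel_dens. now rewrite (proj2 (Nat.leb_gt (S N) N) (Nat.lt_succ_diag_r N)). Qed.

Definition current (k : nat) (t : R) : R := lam * r ^ k * (rel_dens k t - rel_dens (S k) t).

Lemma flux_current k t : (k <= N)%nat -> flux lam mu (S N) p k t = current k t.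
Proof.
  intros Hk. unfold flux, current, up_rate, down_rate.
  rewrite (proj2 (Nat.ltb_lt k (S N))) by lia.
  destruct (Nat.eq_dec k N) as [->|HkN].
  - rewrite rel_dens_absorbing, (proj2 (Nat.ltb_ge (S N) (S N))) by lia. cbn [andb Nat.leb].
    rewrite (p_rel_dens N) by lia. ring.
  - rewrite (proj2 (Nat.ltb_lt (S k) (S N))), (proj2 (Nat.leb_le 1 (S k))) by lia.
    rewrite (p_rel_dens k), (p_rel_dens (S k)) by lia. cbn [andb pow]. unfold r. field. lra.
Qed.

Lemma current_absorption t : current N t = lam * p N t.
Proof. unfold current. rewrite rel_dens_absorbing, (p_rel_dens N) by lia. ring. Qed.

Lemma derive_state j t : (j <= N)%nat ->
  derivable_pt_lim (p j) t (lag (fun k => current k t) j - current j t).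
Proof.
  intros Hj. rewrite <- flux_current by lia.
  replace (lag (fun k => current k t) j) with (lag (fun k => flux lam mu (S N) p k t) j).
  - apply kolmogorov_forward_flux; auto.
  - destruct j as [|i]; simpl; [|rewrite flux_current by lia]; reflexivity.
Qed.

Lemma derive_weighted_sum (w : nat -> R) t :
  derivable_pt_lim (fun u => sum_lt (fun j => w j * p j u) (S N)) t
    (sum_lt (fun k => (w (S k) - w k) * current k t) (S N) - w (S N) * (lam * p N t)).
Proof.
  rewrite <- current_absorption. change (current N t) with (lag (fun k => current k t) (S N)).
  rewrite <- sum_lt_by_parts. apply derivable_pt_lim_sum_lt. intros j Hj.
  apply (derivable_pt_lim_scal (p j)), derive_state. lia.
Qed.

Definition energy (t : R) : R := sum_lt (fun j => r ^ j * rel_dens j t ^ 2) (S N).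

Definition dissipation (t : R) : R :=
  sum_lt (fun k => r ^ k * (rel_dens k t - rel_dens (S k) t) ^ 2) (S N).

Lemma derive_energy t : derivable_pt_lim energy t (- 2 * lam * dissipation t).
Proof.
  set (cur := fun k => current k t).
  replace (- 2 * lam * dissipation t) with
    (sum_lt (fun j => 2 * rel_dens j t * (lag cur j - cur j)) (S N)).
  2:{ rewrite sum_lt_by_parts. simpl lag. rewrite rel_dens_absorbing.
      unfold dissipation, cur, current. rewrite <- sum_lt_scal.
      rewrite Rmult_0_r, Rmult_0_l, Rminus_0_r. apply sum_lt_ext. intros; ring. }
  apply derivable_pt_lim_sum_lt. intros j Hj.
  assert (Hr := rpow_pos j).
  apply (derivable_pt_lim_ext (fun u => / r ^ j * (p j u * p j u))).
  { intros u. rewrite (p_rel_dens j u) by lia. field. lra. }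
  replace (2 * rel_dens j t * (lag cur j - cur j)) with
    (/ r ^ j * ((lag cur j - cur j) * p j t + p j t * (lag cur j - cur j))).
  2:{ rewrite (p_rel_dens j t) by lia. field. lra. }
  apply (derivable_pt_lim_scal (fun u => p j u * p j u)).
  apply (derivable_pt_lim_mult (p j) (p j)); apply derive_state; lia.
Qed.

Lemma energy_le_dissipation t :
  energy t <= INR (S N) * sum_lt (fun j => r ^ j) (S N) * sum_lt (fun k => / r ^ k) (S N)
              * dissipation t.
Proof.
  set (y := fun j => rel_dens j t). set (d := fun k => y k - y (S k)).
  set (A := sum_lt (fun j => r ^ j) (S N)). set (B := sum_lt (fun k => / r ^ k) (S N)).
  assert (HB : sum_lt (fun k => d k ^ 2) (S N) <= B * dissipation t).
  { unfold dissipation. rewrite <- sum_lt_scal. apply sum_lt_le. intros k Hk.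
    assert (Hr := rpow_pos k).
    assert (/ r ^ k <= B) by (apply (sum_lt_term_le (fun k => / r ^ k)); auto;
                              intros; left; apply Rinv_0_lt_compat, rpow_pos).
    replace (d k ^ 2) with (/ r ^ k * (r ^ k * d k ^ 2)) by (field; lra).
    apply Rmult_le_compat_r; auto. apply Rmult_le_pos; [lra | apply pow2_ge_0]. }
  (* y vanishes at the absorbing state, so each y j is a sum of the steps d k *)
  assert (Hy : forall j, (j <= N)%nat -> y j ^ 2 <= INR (S N) * (B * dissipation t)).
  { intros j Hj.
    assert (Hsteps := Rabs_sub_le_sum_lt_steps y (S N) j ltac:(lia)).
    unfold y at 2 in Hsteps. rewrite rel_dens_absorbing, Rminus_0_r in Hsteps.
    pose proof (sum_lt_sqr_le (fun k => Rabs (d k)) (S N)) as Hcs.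
    rewrite (sum_lt_ext (fun k => Rabs (d k) ^ 2) (fun k => d k ^ 2)) in Hcs by (intros; apply pow2_abs).
    rewrite <- pow2_abs. apply Rle_trans with (sum_lt (fun k => Rabs (d k)) (S N) ^ 2).
    - apply pow_incr. split; [apply Rabs_pos | exact Hsteps].
    - eapply Rle_trans; [exact Hcs|]. apply Rmult_le_compat_l; [apply pos_INR | exact HB]. }
  unfold energy.
  replace (INR (S N) * A * B * dissipation t) with (INR (S N) * (B * dissipation t) * A) by ring.
  unfold A. rewrite <- sum_lt_scal. apply sum_lt_le. intros j Hj.
  rewrite (Rmult_comm _ (r ^ j)).
  apply Rmult_le_compat_l; [left; apply rpow_pos | apply Hy; lia].
Qed.

Lemma energy_at0 : energy 0 = 1.
Proof.
  unfold energy. rewrite sum_lt_first, (sum_lt_ext _ (fun _ => 0)), sum_lt_const.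
  - unfold rel_dens. simpl. rewrite p_init by lia. simpl. field.
  - intros k Hk. unfold rel_dens. destruct (Nat.leb (S k) N); [|ring].
    rewrite p_init by lia. unfold Rdiv. simpl. ring.
Qed.

Lemma energy_decay : exists c, 0 < c /\ forall t, 0 <= t -> energy t <= exp (- c * t).
Proof.
  set (C := INR (S N) * sum_lt (fun j => r ^ j) (S N) * sum_lt (fun k => / r ^ k) (S N)).
  assert (HC : 0 < C).
  { assert (0 < INR (S N)) by (apply lt_0_INR; lia).
    assert (1 <= sum_lt (fun j => r ^ j) (S N))
      by (apply (sum_lt_term_le (fun j => r ^ j) (S N) 0); [intros; left; apply rpow_pos | lia]).
    assert (1 <= sum_lt (fun k => / r ^ k) (S N)).
    { replace 1 with (/ r ^ 0) by (simpl; field).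
      apply (sum_lt_term_le (fun k => / r ^ k)); [|lia].
      intros; left; apply Rinv_0_lt_compat, rpow_pos. }
    unfold C. apply Rmult_lt_0_compat; [apply Rmult_lt_0_compat|]; lra. }
  exists (2 * lam / C). split; [apply Rdiv_lt_0_compat; lra|]. intros t Ht.
  set (c := 2 * lam / C).
  assert (Hc : c * C = 2 * lam) by (unfold c; field; lra).
  (* the energy decays at least at rate c because c * energy <= 2 lam * dissipation *)
  assert (Hmono : energy t * exp (c * t) <= energy 0 * exp (c * 0)).
  { apply (le_of_derive_nonpos (fun u => energy u * exp (c * u))
      (fun u => - 2 * lam * dissipation u * exp (c * u) + energy u * (c * exp (c * u)))); auto.
    - intros u _. apply (derivable_pt_lim_mult energy (fun v => exp (c * v))).
      + apply derive_energy.
      + apply derivable_pt_lim_exp_scal.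
    - intros u _. assert (energy u <= C * dissipation u) by apply energy_le_dissipation.
      pose proof (exp_pos (c * u)).
      assert (0 < c) by (unfold c; apply Rdiv_lt_0_compat; lra).
      assert (c * energy u <= 2 * lam * dissipation u) by (rewrite <- Hc; nra).
      nra. }
  rewrite energy_at0, Rmult_0_r, exp_0, Rmult_1_r in Hmono.
  replace (- c * t) with (- (c * t)) by ring. rewrite exp_Ropp.
  pose proof (exp_pos (c * t)).
  apply (Rmult_le_reg_r (exp (c * t))); auto. rewrite Rinv_l; lra.
Qed.

Lemma state_sq_le : exists c, 0 < c /\
  forall j t, (j <= N)%nat -> 0 <= t -> p j t ^ 2 <= r ^ j * exp (- c * t).
Proof.
  destruct energy_decay as [c [Hc Hdecay]]. exists c. split; auto. intros j t Hj Ht.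
  assert (Hterm : r ^ j * rel_dens j t ^ 2 <= energy t).
  { apply (sum_lt_term_le (fun j => r ^ j * rel_dens j t ^ 2)); [|lia].
    intros; apply Rmult_le_pos; [left; apply rpow_pos | apply pow2_ge_0]. }
  rewrite (p_rel_dens j t) by auto.
  replace ((r ^ j * rel_dens j t) ^ 2) with (r ^ j * (r ^ j * rel_dens j t ^ 2)) by ring.
  apply Rmult_le_compat_l; [left; apply rpow_pos|].
  eapply Rle_trans; [exact Hterm | auto].
Qed.

Lemma survival_sum t : survival (S N) p t = sum_lt (fun j => p j t) (S N).
Proof. unfold survival. replace (S N - 1)%nat with N by lia. apply sum_f_R0_sum_lt. Qed.

Lemma survival_at0 : survival (S N) p 0 = 1.
Proof.
  rewrite survival_sum, sum_lt_first, (sum_lt_ext _ (fun _ => 0)), sum_lt_const.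
  - rewrite p_init by lia. simpl; ring.
  - intros k Hk. rewrite p_init by lia. reflexivity.
Qed.

Lemma derive_absorbed t : derivable_pt_lim (fun u => 1 - survival (S N) p u) t (lam * p N t).
Proof.
  apply (derivable_pt_lim_ext (fun u => 1 - sum_lt (fun j => 1 * p j u) (S N))).
  { intros u. rewrite survival_sum. f_equal. apply sum_lt_ext. intros; ring. }
  replace (lam * p N t) with (0 - (sum_lt (fun k => (1 - 1) * current k t) (S N) - 1 * (lam * p N t))).
  2:{ rewrite (sum_lt_ext _ (fun _ => 0)), sum_lt_const by (intros; ring). ring. }
  apply (derivable_pt_lim_minus (fun _ => 1)).
  - apply derivable_pt_lim_const.
  - apply (derive_weighted_sum (fun _ => 1)).
Qed.

Definition return_prob (t : R) : R := sum_lt (fun j => hit_prob N r j * p j t) (S N).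

Lemma derive_return_prob t : derivable_pt_lim return_prob t (- escape_rate lam N r * p 0%nat t).
Proof.
  pose proof (derive_weighted_sum (hit_prob N r) t) as Hd.
  rewrite hit_prob_absorbing, Rmult_0_l, Rminus_0_r in Hd by (left; apply r_pos).
  rewrite (sum_lt_ext _ (fun k => - escape_rate lam N r * (rel_dens k t - rel_dens (S k) t))) in Hd.
  - rewrite sum_lt_scal, sum_lt_telescope, rel_dens_absorbing, Rminus_0_r in Hd.
    rewrite (p_rel_dens 0 t), pow_O, Rmult_1_l by lia. exact Hd.
  - intros k Hk. rewrite hit_prob_step. unfold current, escape_rate.
    replace (r ^ N) with (r ^ (N - k) * r ^ k) by (rewrite <- pow_add; f_equal; lia).
    pose proof (hit_denom_ge1 N r (Rlt_le _ _ r_pos)). field. lra.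
Qed.

Lemma return_prob_at0 : return_prob 0 = 1.
Proof.
  unfold return_prob. rewrite sum_lt_first, hit_prob_start, (sum_lt_ext _ (fun _ => 0)), sum_lt_const.
  - rewrite p_init by lia. simpl; ring.
  - intros k Hk. rewrite p_init by lia. simpl; ring.
Qed.

Lemma Rabs_transient_le j t w : r <= 1 -> 0 <= t -> (1 <= j <= N)%nat -> 0 <= w <= 1 ->
  Rabs (w * p j t) <= sqrt r.
Proof.
  intros Hr1 Ht Hj Hw. destruct state_sq_le as [c [Hc Hsq]].
  assert (Hexp : exp (- c * t) <= 1) by (apply exp_le_1; nra).
  assert (Hrj : r ^ j <= r).
  { destruct j as [|j]; [lia|]. simpl. pose proof r_pos.
    assert (r ^ j <= 1) by (rewrite <- (pow1 j); apply pow_incr; lra). nra. }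
  assert (Hp2 : (w * p j t) ^ 2 <= r).
  { specialize (Hsq j t ltac:(lia) Ht). pose proof (rpow_pos j).
    assert (p j t ^ 2 <= r) by nra. pose proof (pow2_ge_0 (p j t)).
    assert (Hw2 : w ^ 2 <= 1) by nra.
    replace ((w * p j t) ^ 2) with (w ^ 2 * p j t ^ 2) by ring.
    apply Rle_trans with (1 * p j t ^ 2); [apply Rmult_le_compat_r|]; lra. }
  rewrite <- sqrt_Rsqr_abs. apply sqrt_le_1_alt. unfold Rsqr. simpl in Hp2. lra.
Qed.

Lemma return_prob_near_p0 u : r <= 1 -> 0 <= u -> Rabs (return_prob u - p 0%nat u) <= INR N * sqrt r.
Proof.
  intros Hr1 Hu. replace (p 0%nat u) with (hit_prob N r 0 * p 0%nat u) by (rewrite hit_prob_start; ring).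
  apply (Rabs_sum_lt_tail_le (fun j => hit_prob N r j * p j u)). intros k Hk.
  apply Rabs_transient_le; auto; [lia|]. apply hit_prob_bounds; [left; apply r_pos | lia].
Qed.

Lemma survival_near_return_prob t : r <= 1 -> 0 <= t ->
  Rabs (survival (S N) p t - return_prob t) <= INR N * sqrt r.
Proof.
  intros Hr1 Ht.
  replace (survival (S N) p t - return_prob t) with
    (sum_lt (fun j => (1 - hit_prob N r j) * p j t) (S N) - (1 - hit_prob N r 0) * p 0%nat t).
  2:{ rewrite hit_prob_start, survival_sum. unfold return_prob.
      rewrite (sum_lt_ext (fun j => (1 - hit_prob N r j) * p j t) (fun j => p j t - hit_prob N r j * p j t))
        by (intros; ring).
      rewrite sum_lt_minus. ring. }
  apply (Rabs_sum_lt_tail_le (fun j => (1 - hit_prob N r j) * p j t)). intros k Hk.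
  apply Rabs_transient_le; auto; [lia|].
  pose proof (hit_prob_bounds N r (S k) (Rlt_le _ _ r_pos) ltac:(lia)). lra.
Qed.

Lemma survival_near_exp T : r <= 1 -> 0 <= T ->
  Rabs (survival (S N) p T - exp (- escape_rate lam N r * T)) <= 2 * (INR N * sqrt r).
Proof.
  intros Hr1 HT.
  assert (Hk : 0 < escape_rate lam N r).
  { unfold escape_rate. pose proof (hit_denom_ge1 N r (Rlt_le _ _ r_pos)).
    apply Rdiv_lt_0_compat; [apply Rmult_lt_0_compat; [lra | apply rpow_pos] | lra]. }
  pose proof (relaxation_close return_prob (p 0%nat) (escape_rate lam N r) (INR N * sqrt r) T Hk HT
    derive_return_prob (fun u Hu => return_prob_near_p0 u Hr1 Hu)) as Hclose.
  rewrite return_prob_at0, Rmult_1_l in Hclose.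
  replace (survival (S N) p T - exp (- escape_rate lam N r * T)) with
    ((survival (S N) p T - return_prob T) + (return_prob T - exp (- escape_rate lam N r * T))) by ring.
  eapply Rle_trans; [apply Rabs_triang|].
  pose proof (survival_near_return_prob T Hr1 HT). lra.
Qed.

Definition laplace_weight (s : R) (j : nat) : R :=
  lap_u N (s / lam) r j / (lam * lap_u N (s / lam) r (S N)).

Definition laplace_mass (s t : R) : R := sum_lt (fun j => laplace_weight s j * p j t) (S N).

Section Laplace.

Variable s : R.
Hypothesis Hs : 0 <= s.

Let a := s / lam.
Let u := lap_u N a r.
Let U := lap_U N a r.

Let a_nonneg : 0 <= a.
Proof. apply Rmult_le_pos; [lra | left; apply Rinv_0_lt_compat; lra]. Qed.

Let u_last_ge1 : 1 <= u (S N).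
Proof. apply lap_u_ge1; [apply a_nonneg | left; apply r_pos]. Qed.

Lemma laplace_mass_by_parts t :
  laplace_mass s t = / (lam * u (S N)) * sum_lt (fun k => U k * (rel_dens k t - rel_dens (S k) t)) (S N).
Proof.
  set (y := fun j => rel_dens j t).
  unfold laplace_mass. rewrite (sum_lt_ext _ (fun j => / (lam * u (S N)) * ((U j - lag U j) * y j))).
  2:{ intros j Hj. unfold U. rewrite lap_U_diff, (p_rel_dens j t) by lia.
      unfold laplace_weight, y. fold a. fold u. unfold Rdiv. ring. }
  rewrite sum_lt_scal. f_equal.
  pose proof (sum_lt_by_parts y U (S N)) as Hparts.
  replace (y (S N)) with 0 in Hparts by (symmetry; apply rel_dens_absorbing).
  rewrite (sum_lt_ext _ (fun j => -1 * (y j * (lag U j - U j)))) by (intros; ring).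
  rewrite (sum_lt_ext (fun k => U k * _) (fun k => -1 * ((y (S k) - y k) * U k))) by (intros; unfold y; ring).
  rewrite !sum_lt_scal, Hparts. ring.
Qed.

Lemma derive_laplace_mass t :
  derivable_pt_lim (laplace_mass s) t (s * r ^ N * laplace_mass s t - p N t).
Proof.
  pose proof u_last_ge1.
  pose proof (derive_weighted_sum (laplace_weight s) t) as Hd.
  replace (laplace_weight s (S N) * (lam * p N t)) with (p N t) in Hd
    by (unfold laplace_weight; fold a u; field; lra).
  replace (s * r ^ N * laplace_mass s t) with
    (sum_lt (fun k => (laplace_weight s (S k) - laplace_weight s k) * current k t) (S N)); [exact Hd|].
  rewrite laplace_mass_by_parts, <- !sum_lt_scal. apply sum_lt_ext. intros k Hk.
  unfold laplace_weight, current. fold a u. unfold u at 1. rewrite lap_u_S. fold u U.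
  replace (r ^ N) with (r ^ (N - k) * r ^ k) by (rewrite <- pow_add; f_equal; lia).
  unfold a. field. lra.
Qed.

Lemma laplace_mass_at0 : laplace_mass s 0 = / (lam * u (S N)).
Proof.
  unfold laplace_mass. rewrite sum_lt_first, (sum_lt_ext _ (fun _ => 0)), sum_lt_const.
  - rewrite p_init by lia. unfold laplace_weight. fold a u. simpl. unfold u. cbn [lap_u laplace_coef fst].
    unfold Rdiv. ring.
  - intros k Hk. rewrite p_init by lia. simpl; ring.
Qed.

Lemma laplace_mass_sq_decay : exists c K, 0 < c /\
  forall t, 0 <= t -> laplace_mass s t ^ 2 <= K * exp (- c * t).
Proof.
  destruct state_sq_le as [c [Hc Hsq]].
  exists c, (INR (S N) * sum_lt (fun j => laplace_weight s j ^ 2 * r ^ j) (S N)). split; auto.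
  intros t Ht. eapply Rle_trans; [apply sum_lt_sqr_le|].
  replace (INR (S N) * sum_lt (fun j => laplace_weight s j ^ 2 * r ^ j) (S N) * exp (- c * t)) with
    (INR (S N) * (exp (- c * t) * sum_lt (fun j => laplace_weight s j ^ 2 * r ^ j) (S N))) by ring.
  rewrite <- (sum_lt_scal (exp (- c * t))). apply Rmult_le_compat_l; [apply pos_INR|].
  apply sum_lt_le. intros j Hj.
  rewrite Rpow_mult_distr.
  replace (exp (- c * t) * (laplace_weight s j ^ 2 * r ^ j)) with
    (laplace_weight s j ^ 2 * (r ^ j * exp (- c * t))) by ring.
  apply Rmult_le_compat_l; [apply pow2_ge_0 | apply Hsq; auto; lia].
Qed.

Lemma laplace_antiderivative_tail c eps : 0 < eps -> exists B, forall b, B <= b ->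
  Rabs (- c * (exp (- (s * r ^ N) * b) * laplace_mass s b) - 0) < eps.
Proof.
  intros Heps. destruct laplace_mass_sq_decay as [c' [K [Hc' HK]]].
  destruct (exp_neg_tail (c ^ 2 * K) c' (eps ^ 2)) as [B HB]; [auto | apply pow_lt; auto|].
  exists (Rmax 0 B). intros b Hb.
  assert (Hb0 : 0 <= b) by (eapply Rle_trans; [apply Rmax_l | exact Hb]).
  assert (HbB : B <= b) by (eapply Rle_trans; [apply Rmax_r | exact Hb]).
  set (e := exp (- (s * r ^ N) * b)).
  assert (He : e <= 1).
  { apply exp_le_1. assert (0 <= s * r ^ N) by (apply Rmult_le_pos; [auto | left; apply rpow_pos]).
    nra. }
  assert (0 < e) by apply exp_pos. pose proof (HK b Hb0). specialize (HB b HbB).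
  assert (Hsq : (- c * (e * laplace_mass s b) - 0) ^ 2 < eps ^ 2).
  { replace ((- c * (e * laplace_mass s b) - 0) ^ 2) with (c ^ 2 * (e ^ 2 * laplace_mass s b ^ 2))
      by ring.
    pose proof (pow2_ge_0 c). pose proof (pow2_ge_0 (laplace_mass s b)).
    assert (e ^ 2 <= 1) by nra.
    apply Rle_lt_trans with (c ^ 2 * (K * exp (- c' * b))); [|lra].
    apply Rmult_le_compat_l; auto. nra. }
  rewrite <- (Rabs_pos_eq eps) by lra. apply Rsqr_lt_abs_0. unfold Rsqr. simpl in Hsq. lra.
Qed.

Lemma laplace_absorption c :
  improper_int0 (fun t => exp (- (s * r ^ N) * t) * (c * p N t)) (c / (lam * u (S N))).
Proof.
  pose proof u_last_ge1.
  set (F := fun t => - c * (exp (- (s * r ^ N) * t) * laplace_mass s t)).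
  replace (c / (lam * u (S N))) with (0 - F 0).
  2:{ unfold F. rewrite Rmult_0_r, exp_0, Rmult_1_l, laplace_mass_at0. field. lra. }
  apply improper_int0_of_antiderivative.
  - intros x. apply continuity_pt_mult; [reg|]. apply continuity_pt_mult; [reg|].
    apply derivable_continuous_pt. eexists. apply derive_state. lia.
  - intros t. unfold F.
    replace (exp (- (s * r ^ N) * t) * (c * p N t)) with
      (- c * (- (s * r ^ N) * exp (- (s * r ^ N) * t) * laplace_mass s t
              + exp (- (s * r ^ N) * t) * (s * r ^ N * laplace_mass s t - p N t))) by ring.
    apply (derivable_pt_lim_scal (fun t => exp (- (s * r ^ N) * t) * laplace_mass s t)).
    apply (derivable_pt_lim_mult (fun t => exp (- (s * r ^ N) * t))).
    + apply derivable_pt_lim_exp_scal.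
    + apply derive_laplace_mass.
  - apply laplace_antiderivative_tail.
Qed.

End Laplace.
End BirthDeathChain.

(** * The limit mu -> oo *)

Lemma survival_scaled_limit lam N (P : R -> nat -> R -> R) t : 0 < lam -> 0 <= t ->
  (forall mu, 0 < mu -> kolmogorov_forward lam mu (S N) (P mu)) ->
  lim_mu_infty (fun mu => survival (S N) (P mu) (t / (lam / mu) ^ N)) (exp (- lam * t)).
Proof.
  intros Hlam Ht HP.
  set (B := fun r => 2 * (INR N * sqrt r) + Rabs (exp (- lam * t / hit_denom N r) - exp (- lam * t))).
  apply (lim_mu_infty_squeeze _ (fun mu => B (lam / mu)) _ lam).
  - assert (HB0 : B 0 = 0).
    { unfold B. rewrite sqrt_0, hit_denom_at0, Rdiv_1_r, Rminus_diag, Rabs_R0. ring. }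
    rewrite <- HB0. apply lim_mu_infty_comp; auto. unfold B. reg.
    + apply continuity_pt_hit_denom.
    + rewrite hit_denom_at0. lra.
    + lra.
  - intros mu Hmu. set (r := lam / mu).
    assert (Hr : 0 < r) by (apply Rdiv_lt_0_compat; lra).
    assert (Hr1 : r <= 1).
    { unfold r, Rdiv. apply (Rmult_le_reg_r mu); [lra|]. rewrite Rmult_assoc, Rinv_l; lra. }
    assert (Hrn : 0 < r ^ N) by (apply pow_lt; auto).
    assert (HT : 0 <= t / r ^ N) by (apply Rmult_le_pos; [auto | left; apply Rinv_0_lt_compat; auto]).
    pose proof (survival_near_exp lam mu N (P mu) Hlam ltac:(lra) (HP mu ltac:(lra)) _ Hr1 HT) as Hclose.
    fold r in Hclose. pose proof (hit_denom_ge1 N r (Rlt_le _ _ Hr)).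
    replace (- escape_rate lam N r * (t / r ^ N)) with (- lam * t / hit_denom N r) in Hclose
      by (unfold escape_rate; field; lra).
    unfold B.
    replace (survival (S N) (P mu) (t / r ^ N) - exp (- lam * t)) with
      ((survival (S N) (P mu) (t / r ^ N) - exp (- lam * t / hit_denom N r))
       + (exp (- lam * t / hit_denom N r) - exp (- lam * t))) by ring.
    eapply Rle_trans; [apply Rabs_triang | lra].
Qed.

Lemma laplace_scaled_limit lam N c s : 0 < lam -> 0 <= s ->
  lim_mu_infty (fun mu => c / (lam * lap_u N (s / lam) (lam / mu) (S N))) (c / (lam + s)).
Proof.
  intros Hlam Hs. set (G := fun r => c / (lam * lap_u N (s / lam) r (S N))).
  replace (c / (lam + s)) with (G 0) by (unfold G; rewrite lap_u_r0_absorbing; f_equal; field; lra).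
  apply (lim_mu_infty_comp G lam Hlam). unfold G, Rdiv.
  apply continuity_pt_mult; [reg|]. apply continuity_pt_inv.
  - apply continuity_pt_mult; [reg | apply continuity_pt_lap].
  - rewrite lap_u_r0_absorbing. apply Rgt_not_eq, Rmult_lt_0_compat; [lra|].
    pose proof (Rinv_0_lt_compat lam Hlam). nra.
Qed.

Theorem mainTheorem1 (n : nat) (lam : R) (P : R -> nat -> R -> R)
  (Hn : (2 <= n)%nat) (Hlam : 0 < lam)
  (HP : forall mu, 0 < mu -> kolmogorov_forward lam mu n (P mu)) :
  (forall t, 0 <= t ->
     lim_mu_infty (fun mu => survival n (P mu) (t / scale lam mu n)) (exp (- lam * t)))
  /\
  (forall mu, 0 < mu ->
     survival n (P mu) 0 = 1 /\
     forall t, 0 < t ->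
       derivable_pt_lim (fun u => 1 - survival n (P mu) u) t (lam * P mu (n - 1)%nat t))
  /\
  (forall s, 0 <= s -> exists L : R -> R,
     (forall mu, 0 < mu ->
        improper_int0 (fun t => exp (- (s * scale lam mu n) * t) * (lam * P mu (n - 1)%nat t)) (L mu))
     /\ lim_mu_infty L (lam / (lam + s)))
  /\
  (forall s, 0 <= s -> exists Phi : R -> R,
     (forall mu, 0 < mu ->
        improper_int0 (fun t => exp (- (scale lam mu n * s) * t) * P mu (n - 1)%nat t) (Phi mu))
     /\ lim_mu_infty Phi (1 / (lam + s))).
Proof.
  destruct n as [|N]; [lia|].
  unfold scale. replace (S N - 1)%nat with N by lia.
  split; [|split; [|split]].
  - intros t Ht. now apply survival_scaled_limit.
  - intros mu Hmu. split.
    + apply (survival_at0 lam mu); auto.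
    + intros t _. apply (derive_absorbed lam mu); auto.
  - intros s Hs. eexists. split.
    + intros mu Hmu. apply (laplace_absorption lam mu); auto.
    + now apply laplace_scaled_limit.
  - intros s Hs. eexists. split.
    + intros mu Hmu.
      apply (improper_int0_ext (fun t => exp (- (s * (lam / mu) ^ N) * t) * (1 * P mu N t))).
      { intros t. now rewrite Rmult_1_l, (Rmult_comm s). }
      apply (laplace_absorption lam mu); auto.
    + now apply laplace_scaled_limit.
Qed.
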